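(* Assume the setting described in the context, with $\rho$ atomic and $(\rho,\sim)$ weakly commutative. Fix a deterministic strategy $\Lambda$, an initial distribution $\omega^{\mathrm{init}}$, a permutation $\pi$ of $F$ and an integer $t$. Then there exist a set $\mathrm{Bad}_\pi(t)$ of $\pi$-stable walks and a swapping mapping $\Phi:\mathrm{Bad}(t)\to\mathrm{Bad}_\pi(t)$ that is a bijection.
   Context: Setting: $\Omega$ is a finite set and $F$ a finite set of flaws, each a nonempty subset of $\Omega$; $F_\sigma=\{f:\sigma\in f\}$. For $\sigma\in\Omega$ and $f\in F_\sigma$ there is a probability distribution $\rho(\cdot\mid f,\sigma)$ with support $A(f,\sigma)$. We write $\sigma\xrightarrow{f}\sigma'$ when $f\in F_\sigma$ and $\sigma'\in A(f,\sigma)$. A walk is a sequence $\sigma_1\xrightarrow{w_1}\sigma_2\cdots\xrightarrow{w_t}\sigma_{t+1}$ of such steps; its word is $w_1\ldots w_t$ and its length is $t$. $\sim$ is a symmetric relation on $F$ (loops allowed), with $\Gamma(f)=\{g:f\sim g\}$, $\Gamma^+(f)=\Gamma(f)\cup\{f\}$ and $\Gamma^+(S)=\bigcup_{f\in S}\Gamma^+(f)$. It is assumed that for every step $\sigma\xrightarrow{f}\sigma'$, $F_{\sigma'}\subseteq(F_\sigma\setminus\{f\})\cup\Gamma(f)$. Independent sets are sets $S$ with $f\not\sim g$ for distinct $f,g\in S$, and $\mathrm{Ind}(F)$ is the family of independent sets. Write $f\cong g$ if $f\sim g$ or $f=g$. $\rho$ is atomic if for every $f$ and $\sigma'$ there is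 at most one $\sigma$ with $\sigma\xrightarrow{f}\sigma'$. $(\rho,\sim)$ is weakly commutative if there is an injective map SWAP sending each walk $\sigma_1\xrightarrow{f}\sigma_2\xrightarrow{g}\sigma_3$ with $f\not\sim g$ to a walk $\sigma_1\xrightarrow{g}\sigma_2'\xrightarrow{f}\sigma_3$; fix such a map. A valid swap applied to a walk replaces a consecutive subwalk $\sigma_1\xrightarrow{f}\sigma_2\xrightarrow{g}\sigma_3$ with $f\not\cong g$ by its SWAP image. A swapping mapping is a map on a set of walks that sends each walk to the result of applying some sequence of valid swaps to it. A deterministic strategy assigns to each walk $\sigma_1\xrightarrow{w_1}\cdots\sigma_i$ whose last state is flawed a flaw in $F_{\sigma_i}$. A walk follows the strategy if each $w_i$ is the flaw assigned to its prefix ending at $\sigma_i$. $\mathrm{Bad}(t)$ is the set of walks of length $t$ that start at a state $\sigma_1$ with $\omega^{\mathrm{init}}(\sigma_1)>0$ and follow $\Lambda$; equivalently, the walks of length $t$ produced with positive probability by Algorithm 1 (sample $\sigma$ from $\omega^{\mathrm{init}}$; while $F_\sigma\neq\varnothing$, choose $f\in F_\sigma$ by $\Lambda$ and move to $\sigma'$ sampled from $\rho(\cdot\mid f,\sigma)$). Stable and $\pi$-stable words: a sequence of sets $(I_1,\ldots,I_s)$ with $s\ge1$ is stable if each $I_r\in\mathrm{Ind}(F)$ and $I_{r+1}\subseteq\Gamma^+(I_r)$. A word $W$ is stable if $W=W_1\ldots W_s$ with nonempty words $W_r$ of distinct flaws such that the sequence of their flaw sets is stable. It is $\pi$-stable if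 in addition each $W_r$ is strictly increasing in the order $\preceq_\pi$ induced by the permutation $\pi$. A walk is ($\pi$-)stable if its word is. *)

From HB Require Import structures.
From mathcomp Require Import all_boot all_order all_algebra.
Set Implicit Arguments. Unset Strict Implicit. Unset Printing Implicit Defensive.
Import Order.TTheory GRing.Theory Num.Theory.
Local Open Scope ring_scope.

Section Flaws.
Variables (Omega F : finType).
Variable fl : F -> {set Omega}.
(* sim : the symmetric relation ~ on flaws (loops allowed) *)
Variable sim : rel F.

Definition flaws_at (s : Omega) : {set F} := [set f | s \in fl f].

Definition is_distr (R : numDomainType) (p : Omega -> R) : Prop :=
  (forall x, 0 <= p x) /\ \sum_x p x = 1.

(* rho f s s' = rho(s' | f, s);  step: s --f--> s' *)
Definition step (R : numDomainType) (rho : F -> Omega -> Omega -> R)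
    (s : Omega) (f : F) (s' : Omega) : bool :=
  (s \in fl f) && (0 < rho f s s').

(* A walk sigma_1 --w_1--> sigma_2 ... --w_t--> sigma_{t+1} is represented by
   (sigma_1, [:: (w_1, sigma_2); ...; (w_t, sigma_{t+1})]). *)
Definition walk := (Omega * seq (F * Omega))%type.

Definition wlen (w : walk) : nat := size w.2.
Definition word (w : walk) : seq F := map fst w.2.
Definition wlast (w : walk) : Omega := last w.1 (map snd w.2).

Fixpoint steps_ok (R : numDomainType) (rho : F -> Omega -> Omega -> R)
    (s : Omega) (l : seq (F * Omega)) : bool :=
  if l is (f, s') :: l' then step rho s f s' && steps_ok rho s' l' else true.

Definition is_walk (R : numDomainType) (rho : F -> Omega -> Omega -> R)
    (w : walk) : bool := steps_ok rho w.1 w.2.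

Definition flaw_transition_ok (R : numDomainType)
    (rho : F -> Omega -> Omega -> R) : Prop :=
  forall s f s', step rho s f s' ->
    forall g, s' \in fl g -> ((s \in fl g) && (g != f)) || sim f g.

Definition atomic (R : numDomainType) (rho : F -> Omega -> Omega -> R) : Prop :=
  forall f s1 s2 s', step rho s1 f s' -> step rho s2 f s' -> s1 = s2.

(* The fixed map SWAP of weak commutativity: the walk
   s1 --f--> s2 --g--> s3 (with f not~ g) is sent to
   s1 --g--> sw s1 f s2 g s3 --f--> s3; SWAP is injective. *)
Definition swap_map_ok (R : numDomainType) (rho : F -> Omega -> Omega -> R)
    (sw : Omega -> F -> Omega -> F -> Omega -> Omega) : Prop :=
  forall s1 f s2 g s3, step rho s1 f s2 -> step rho s2 g s3 -> ~~ sim f g ->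
    step rho s1 g (sw s1 f s2 g s3) && step rho (sw s1 f s2 g s3) f s3.

Definition swap_map_inj (R : numDomainType) (rho : F -> Omega -> Omega -> R)
    (sw : Omega -> F -> Omega -> F -> Omega -> Omega) : Prop :=
  forall s1 f s2 s2' g s3,
    step rho s1 f s2 -> step rho s2 g s3 ->
    step rho s1 f s2' -> step rho s2' g s3 -> ~~ sim f g ->
    sw s1 f s2 g s3 = sw s1 f s2' g s3 -> s2 = s2'.

Definition swap_step (R : numDomainType) (rho : F -> Omega -> Omega -> R)
    (sw : Omega -> F -> Omega -> F -> Omega -> Omega) (w w' : walk) : Prop :=
  exists pre f s2 g s3 post,
    let s1 := last w.1 (map snd pre) in
    [/\ w.2 = pre ++ (f, s2) :: (g, s3) :: post,
        ~~ ((f == g) || sim f g),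
        step rho s1 f s2, step rho s2 g s3 &
        w' = (w.1, pre ++ (g, sw s1 f s2 g s3) :: (f, s3) :: post)].

Inductive swaps (R : numDomainType) (rho : F -> Omega -> Omega -> R)
    (sw : Omega -> F -> Omega -> F -> Omega -> Omega) : walk -> walk -> Prop :=
| swaps_refl w : swaps rho sw w w
| swaps_cons w1 w2 w3 :
    swap_step rho sw w1 w2 -> swaps rho sw w2 w3 -> swaps rho sw w1 w3.

Definition is_strategy (R : numDomainType) (rho : F -> Omega -> Omega -> R)
    (Lam : walk -> option F) : Prop :=
  forall w, is_walk rho w -> flaws_at (wlast w) != set0 ->
    exists2 f, Lam w = Some f & f \in flaws_at (wlast w).

Definition follows (Lam : walk -> option F) (w : walk) : Prop :=
  forall i, (i < size w.2)%N -> Lam (w.1, take i w.2) = omap fst (onth w.2 i).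

Definition Bad (R : numDomainType) (rho : F -> Omega -> Omega -> R)
    (omega : Omega -> R) (Lam : walk -> option F) (t : nat) (w : walk) : Prop :=
  [/\ is_walk rho w, wlen w = t, 0 < omega w.1 & follows Lam w].

Definition indep (S : {set F}) : bool :=
  [forall f in S, forall g in S, (f != g) ==> ~~ sim f g].

Definition GammaP (S : {set F}) : {set F} :=
  [set g | [exists f in S, (g == f) || sim f g]].

Definition stable_seq (Is : seq {set F}) : bool :=
  (
  [&& (0 < size Is)%N, all indep Is & sorted (fun I J : {set F} => J \subset GammaP I) Is]).

Definition stable_word (W : seq F) : Prop :=
  exists Ws : seq (seq F),
    [/\ W = flatten Ws, all (fun Wr => Wr != [::]) Ws, all uniq Ws &
        stable_seq (map (fun Wr => [set f in Wr]) Ws)].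

(* pi : F -> 'I_#|F| a bijection (the permutation / ranking of F);
   f \prec_pi g iff pi f < pi g *)
Definition pi_stable_word (pi : F -> 'I_#|F|) (W : seq F) : Prop :=
  exists Ws : seq (seq F),
    [/\ W = flatten Ws, all (fun Wr => Wr != [::]) Ws, all uniq Ws,
        stable_seq (map (fun Wr => [set f in Wr]) Ws) &
        all (sorted (fun f g => (pi f < pi g)%N)) Ws].

End Flaws.

(** Swapping two consecutive steps whose flaws are neither equal nor related
   changes the word of a walk by a commutation, so words are naturally
   considered up to trace equivalence.  Every nonempty word is
   trace-equivalent to a stable one, its Foata normal form: appending a letter
   to a stable word, the letter sinks left past every block it commutes with.
   Sorting each block by [pi] makes the normal form [pi]-stable, and
   weak commutativity lifts each commutation to a valid swap of the walk; this
   defines [Phi].  For injectivity, atomicity means that a walk is determined by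
   its word and its final state, so trace-equivalent walks with the same final
   state have the same first state.  Two walks with the same image under [Phi]
   therefore share their first state, and following the deterministic
   strategy they share their first flaw; cancelling it and repeating the
   argument on the remaining walks shows that they coincide. *)
From Stdlib Require Import Relation_Operators ClassicalEpsilon.
From HB Require Import structures.
From mathcomp Require Import all_boot all_order all_algebra.
Set Implicit Arguments. Unset Strict Implicit. Unset Printing Implicit Defensive.
Import Order.TTheory GRing.Theory Num.Theory.

Lemma clos_rt_map (A B : Type) (r : A -> A -> Prop) (r' : B -> B -> Prop)
    (g : A -> B) :
  (forall x y, r x y -> clos_refl_trans B r' (g x) (g y)) ->
  forall x y, clos_refl_trans A r x y -> clos_refl_trans B r' (g x) (g y).
Proof.
move=> gr x y; elim=> [{}x {}y /gr //|{}x|{}x y' z _ gxy _ gyz].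
- exact: rt_refl.
- exact: rt_trans gxy gyz.
Qed.

Lemma rem_cat (T : eqType) (a : T) u v :
  rem a (u ++ v) = if a \in u then rem a u ++ v else u ++ rem a v.
Proof.
elim: u => //= x u IH; rewrite in_cons [a == x]eq_sym.
by case: eqP => //= _; rewrite IH; case: (a \in u).
Qed.

Section Traces.
Variables (F : finType) (sim : rel F).
Hypothesis simC : symmetric sim.

Definition dep (a b : F) : bool := (a == b) || sim a b.

Lemma dep_sym : symmetric dep.
Proof. by move=> a b; rewrite /dep eq_sym simC. Qed.

Definition commute_step (W W' : seq F) : Prop :=
  exists u a b v, [/\ W = u ++ a :: b :: v, W' = u ++ b :: a :: v & ~~ dep a b].

Definition trace_eq : seq F -> seq F -> Prop := clos_refl_trans _ commute_step.

Lemma trace_eq_refl W : trace_eq W W.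
Proof. exact: rt_refl. Qed.

Lemma trace_eq_trans W1 W2 W3 : trace_eq W1 W2 -> trace_eq W2 W3 -> trace_eq W1 W3.
Proof. exact: rt_trans. Qed.

Lemma trace_eq_sym W W' : trace_eq W W' -> trace_eq W' W.
Proof.
elim=> [{}W {}W' [u [a [b [v [-> -> nab]]]]]|{}W|W1 W2 W3 _ E21 _ E32].
- by apply: rt_step; exists u, b, a, v; rewrite dep_sym.
- exact: trace_eq_refl.
- exact: trace_eq_trans E32 E21.
Qed.

Lemma trace_eq_cat W1 W1' W2 W2' :
  trace_eq W1 W1' -> trace_eq W2 W2' -> trace_eq (W1 ++ W2) (W1' ++ W2').
Proof.
move=> E1 E2; apply: (@trace_eq_trans _ (W1' ++ W2)).
  apply: (clos_rt_map (g := cat^~ W2)) E1 => _ _ [u [a [b [v [-> -> nab]]]]].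
  by apply: rt_step; exists u, a, b, (v ++ W2); rewrite -!catA.
apply: (clos_rt_map (g := cat W1')) E2 => _ _ [u [a [b [v [-> -> nab]]]]].
by apply: rt_step; exists (W1' ++ u), a, b, v; rewrite -!catA.
Qed.

Lemma trace_eq_catl u W W' : trace_eq W W' -> trace_eq (u ++ W) (u ++ W').
Proof. exact: trace_eq_cat (trace_eq_refl u). Qed.

Lemma trace_eq_cons a W W' : trace_eq W W' -> trace_eq (a :: W) (a :: W').
Proof. exact: trace_eq_catl [:: a] W W'. Qed.

Lemma trace_eq_flatten_map (g : seq F -> seq F) L :
  {in L, forall B, trace_eq B (g B)} -> trace_eq (flatten L) (flatten (map g L)).
Proof.
elim: L => [|B L IH] /= EL; first exact: trace_eq_refl.
apply: trace_eq_cat; first by apply: EL; rewrite mem_head.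
by apply: IH => C CL; apply: EL; rewrite in_cons CL orbT.
Qed.

Lemma trace_eq_size W W' : trace_eq W W' -> size W = size W'.
Proof.
elim=> // [{}W {}W' [u [a [b [v [-> -> _]]]]]|W1 W2 W3 _ -> //].
by rewrite !size_cat.
Qed.

(* Removing the first occurrence of a letter is compatible with commutations:
   if it is one of the two commuting letters, both sides become equal. *)
Lemma trace_eq_rem a W W' : trace_eq W W' -> trace_eq (rem a W) (rem a W').
Proof.
apply: clos_rt_map => _ _ [u [b [c [v [-> -> nbc]]]]]; rewrite !rem_cat.
case: (a \in u); first by apply: rt_step; exists (rem a u), b, c, v.
have bc : b != c by move: nbc; rewrite negb_or => /andP[].
rewrite /=; case: (b =P a) => [ba|_]; case: (c =P a) => [ca|_] /=.
- by case/eqP: bc; rewrite ba ca.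
- exact: trace_eq_refl.
- exact: trace_eq_refl.
- by apply: rt_step; exists u, b, c, (rem a v).
Qed.

Lemma trace_eq_consK a W W' : trace_eq (a :: W) (a :: W') -> trace_eq W W'.
Proof. by move/(trace_eq_rem a); rewrite /= eqxx. Qed.

Lemma trace_eq_move_front a S : ~~ has (dep a) S -> trace_eq (S ++ [:: a]) (a :: S).
Proof.
elim: S => [|x S IH] /=; first by move=> _; exact: trace_eq_refl.
rewrite negb_or => /andP [nax /IH E]; apply: trace_eq_trans (trace_eq_cons x E) _.
by apply: rt_step; exists [::], x, a, S; rewrite dep_sym.
Qed.

Lemma perm_trace_eq B B' :
  uniq B -> {in B &, forall x y, x != y -> ~~ dep x y} -> perm_eq B B' ->
  trace_eq B B'.
Proof.
elim: B' B => [|y B' IH] B uB indB pBB'.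
  by rewrite (perm_small_eq _ pBB') //; exact: trace_eq_refl.
have yB : y \in B by rewrite (perm_mem pBB') mem_head.
move: uB indB pBB'; case/splitPr: yB => B1 B2 uB indB pBB'.
have pB : perm_eq (B1 ++ y :: B2) (y :: B1 ++ B2) := permEl (perm_catCA B1 [:: y] B2).
have uB' : uniq (y :: B1 ++ B2) by rewrite -(perm_uniq pB).
have subB z : z \in B1 ++ B2 -> z \in B1 ++ y :: B2.
  by rewrite !mem_cat in_cons => /orP[] ->; rewrite ?orbT.
apply: (@trace_eq_trans _ (y :: B1 ++ B2)).
  rewrite -[B1 ++ _]/(B1 ++ [:: y] ++ B2) catA.
  apply: (trace_eq_cat (W1' := y :: B1)) (trace_eq_refl B2).
  apply/trace_eq_move_front/hasPn => x xB1; rewrite dep_sym; apply: indB.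
  - by rewrite subB // mem_cat xB1.
  - by rewrite mem_cat mem_head orbT.
  - by apply/eqP => xy; move: uB'; rewrite /= mem_cat -xy xB1.
apply: trace_eq_cons; apply: IH.
- by case/andP: uB'.
- by move=> x z /subB xB /subB zB; apply: indB.
- by rewrite -(perm_cons y); apply: perm_trans pBB'; rewrite perm_sym.
Qed.

(* A stable word is represented by its blocks in reverse order: the head of
   the list is the last block, and each block depends on the next one. *)
Definition block_ok (B : seq F) : bool :=
  [&& B != [::], uniq B & indep sim [set f in B]].

Definition dep_on (B C : seq F) : bool :=
  [set f in B] \subset GammaP sim [set f in C].

Lemma block_ok_indep B : block_ok B -> {in B &, forall x y, x != y -> ~~ dep x y}.
Proof.
case/and3P=> _ _ /forall_inP indB x y xB yB nxy.
move: (indB x); rewrite inE xB => /(_ isT) /forall_inP /(_ y).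
by rewrite inE yB nxy /dep (negbTE nxy) => /(_ isT).
Qed.

Lemma block_ok1 a : block_ok [:: a].
Proof.
apply/and3P; split => //; apply/forall_inP => x; rewrite inE mem_seq1 => /eqP->.
by apply/forall_inP => y; rewrite inE mem_seq1 => /eqP->; rewrite eqxx.
Qed.

Lemma block_ok_rcons B a : block_ok B -> ~~ has (dep a) B -> block_ok (rcons B a).
Proof.
move=> okB; have indB := block_ok_indep okB; case/and3P: okB => nB uB _.
move/hasPn=> naB; have aB : a \notin B by apply/negP => /naB; rewrite /dep eqxx.
have nsim z : z \in B -> ~~ sim a z by move/naB; rewrite negb_or => /andP[].
apply/and3P; split; first by case: (B) nB.
  by rewrite rcons_uniq aB.
apply/forall_inP => x; rewrite inE mem_rcons in_cons => xI.
apply/forall_inP => y; rewrite inE mem_rcons in_cons => yI.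
case/orP: xI => [/eqP ->|xB]; case/orP: yI => [/eqP ->|yB].
- by rewrite eqxx.
- by rewrite nsim ?implybT.
- by rewrite simC nsim ?implybT.
- by apply/implyP => /(indB x y xB yB); rewrite negb_or => /andP[].
Qed.

Lemma dep_on_refl B : dep_on B B.
Proof.
apply/subsetP => x; rewrite inE => xB; rewrite inE; apply/existsP; exists x.
by rewrite inE xB eqxx.
Qed.

Lemma dep_on_rcons X B a : dep_on X B -> dep_on X (rcons B a).
Proof.
move=> /subsetP XB; apply/subsetP => x /XB; rewrite !inE => /exists_inP [f].
rewrite inE => fB xf; apply/exists_inP; exists f => //.
by rewrite inE mem_rcons in_cons fB orbT.
Qed.

Lemma dep_on_rcons_dep B C a : dep_on B C -> has (dep a) C -> dep_on (rcons B a) C.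
Proof.
move=> /subsetP BC /hasP [c cC ac]; apply/subsetP => x.
rewrite inE mem_rcons in_cons => /orP [/eqP ->|xB]; last by apply: BC; rewrite inE.
by rewrite inE; apply/exists_inP; exists c; rewrite ?inE // [sim c a]simC.
Qed.

(* When [a] commutes with the last block [B], it joins the block right after
   the last block containing a letter dependent on [a] (or the first block). *)
Fixpoint sink (a : F) (B : seq F) (Rs : seq (seq F)) : seq (seq F) :=
  if Rs is C :: Rs' then
    if has (dep a) C then rcons B a :: Rs else B :: sink a C Rs'
  else [:: rcons B a].

Definition nf_rcons (a : F) (Rs : seq (seq F)) : seq (seq F) :=
  if Rs is B :: Rs' then
    if has (dep a) B then [:: a] :: Rs else sink a B Rs'
  else [:: [:: a]].

Lemma sink_ok a B Rs :
  block_ok B -> ~~ has (dep a) B -> all block_ok Rs -> path dep_on B Rs ->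
  all block_ok (sink a B Rs) /\ (forall X, dep_on X B -> path dep_on X (sink a B Rs)).
Proof.
elim: Rs B => [|C Rs IH] B okB naB /=.
  by rewrite block_ok_rcons // => _ _; split => // X /dep_on_rcons ->.
case/andP=> okC okRs /andP [BC pathC]; case: ifP => aC /=.
  rewrite block_ok_rcons //= okC okRs; split => // X XB.
  by rewrite dep_on_rcons //= dep_on_rcons_dep.
have [okS pathS] := IH C okC (negbT aC) okRs pathC.
by rewrite okB okS; split => // X ->; rewrite pathS.
Qed.

Lemma nf_rcons_ok a Rs : all block_ok Rs -> sorted dep_on Rs ->
  all block_ok (nf_rcons a Rs) /\ sorted dep_on (nf_rcons a Rs).
Proof.
case: Rs => [|B Rs] /=; first by rewrite block_ok1.
case/andP=> okB okRs pathB; case: ifP => aB /=.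
  rewrite block_ok1 okB okRs pathB; split => //; rewrite andbT.
  by apply: (dep_on_rcons_dep (B := [::])) aB; apply/subsetP => x; rewrite inE.
have [okS pathS] := sink_ok okB (negbT aB) okRs pathB.
by split => //; apply: path_sorted (pathS B (dep_on_refl B)).
Qed.

Lemma sink_trace_eq a B Rs S : ~~ has (dep a) B -> ~~ has (dep a) S ->
  trace_eq (flatten (rev Rs) ++ B ++ S ++ [:: a]) (flatten (rev (sink a B Rs)) ++ S).
Proof.
have move_in X Y : ~~ has (dep a) Y -> trace_eq (X ++ Y ++ [:: a]) (rcons X a ++ Y).
  by move=> naY; rewrite -cats1 -catA; apply/trace_eq_catl/trace_eq_move_front.
elim: Rs B S => [|C Rs IH] B S naB naS /=; first by rewrite cats0; apply: move_in.
rewrite rev_cons flatten_rcons; case: ifP => aC.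
  rewrite !rev_cons !flatten_rcons -!catA.
  by apply/trace_eq_catl/trace_eq_catl/move_in.
rewrite rev_cons flatten_rcons -!catA.
have := IH C (B ++ S); rewrite -!catA; apply; first by rewrite aC.
by rewrite has_cat negb_or naB naS.
Qed.

Lemma nf_rcons_trace_eq a Rs :
  trace_eq (flatten (rev Rs) ++ [:: a]) (flatten (rev (nf_rcons a Rs))).
Proof.
case: Rs => [|B Rs] /=; first exact: trace_eq_refl.
case: ifP => aB; first by rewrite !rev_cons !flatten_rcons -catA; exact: trace_eq_refl.
have := @sink_trace_eq a B Rs [::]; rewrite rev_cons flatten_rcons !cats0 -catA.
by apply => //; rewrite aB.
Qed.

Lemma nf_rcons_neq_nil a Rs : nf_rcons a Rs != [::].
Proof. by case: Rs => //= B [|C Rs] /=; case: ifP => //; case: ifP. Qed.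

Lemma foata_exists W : exists Rs,
  [/\ trace_eq W (flatten (rev Rs)), all block_ok Rs, sorted dep_on Rs &
      W != [::] -> Rs != [::]].
Proof.
elim/last_ind: W => [|W a [Rs [WRs okRs sortRs _]]].
  by exists [::]; split => //; exact: trace_eq_refl.
have [okRs' sortRs'] := nf_rcons_ok a okRs sortRs.
exists (nf_rcons a Rs); split => // [|_]; last exact: nf_rcons_neq_nil.
rewrite -cats1; apply: trace_eq_trans (nf_rcons_trace_eq a Rs).
exact: trace_eq_cat WRs (trace_eq_refl _).
Qed.

Variable pi : F -> 'I_#|F|.
Hypothesis pi_inj : injective pi.

Definition pi_le (f g : F) : bool := (pi f <= pi g)%N.

Lemma sorted_pi_lt s :
  uniq s -> sorted pi_le s -> sorted (fun f g => (pi f < pi g)%N) s.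
Proof.
move=> us sorts.
have val_pi_inj : injective (fun f => val (pi f)) by move=> x y /val_inj/pi_inj.
have := ltn_sorted_uniq_leq [seq val (pi f) | f <- s].
by rewrite !sorted_map map_inj_uniq // us sorts.
Qed.

Lemma stable_seq_blocks Rs : Rs != [::] -> all block_ok Rs -> sorted dep_on Rs ->
  stable_seq sim [seq [set f in B] | B <- rev Rs].
Proof.
move=> nRs okRs sortRs; apply/and3P; split.
- by rewrite size_map size_rev lt0n size_eq0.
- by rewrite all_map all_rev; apply: sub_all okRs => B /and3P [].
- by rewrite map_rev rev_sorted sorted_map.
Qed.

Lemma pi_stable_exists W : W != [::] ->
  exists2 W', trace_eq W W' & pi_stable_word sim pi W'.
Proof.
move=> nW; have [Rs [WRs okRs sortRs /(_ nW) nRs]] := foata_exists W.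
have sortB : {in rev Rs, forall B, trace_eq B (sort pi_le B)}.
  move=> B; rewrite mem_rev => /(allP okRs) okB; apply: perm_trace_eq.
  - by case/and3P: okB.
  - exact: block_ok_indep.
  - by rewrite perm_sym perm_sort.
exists (flatten (map (sort pi_le) (rev Rs))).
  exact: trace_eq_trans WRs (trace_eq_flatten_map sortB).
have setE : [seq [set f in B] | B <- map (sort pi_le) (rev Rs)] =
            [seq [set f in B] | B <- rev Rs].
  by rewrite -map_comp; apply: eq_map => B; apply/setP => x; rewrite /= !inE mem_sort.
exists (map (sort pi_le) (rev Rs)); split; rewrite ?setE ?stable_seq_blocks //;
  rewrite all_map all_rev; apply: sub_all okRs => B /and3P [nB uB _] /=.
- by rewrite -size_eq0 size_sort size_eq0.
- by rewrite sort_uniq.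
- apply: sorted_pi_lt; first by rewrite sort_uniq.
  by apply: sort_sorted => x y; exact: leq_total.
Qed.

End Traces.

Section Walks.
Variables (R : realFieldType) (Omega F : finType) (fl : F -> {set Omega}) (sim : rel F)
  (rho : F -> Omega -> Omega -> R) (sw : Omega -> F -> Omega -> F -> Omega -> Omega).
Hypothesis simC : symmetric sim.
Hypothesis sw_ok : swap_map_ok fl sim rho sw.
Hypothesis rho_atomic : atomic fl rho.

Local Notation is_walk := (is_walk fl rho).
Local Notation swaps := (swaps fl sim rho sw).
Local Notation trace_eq := (trace_eq sim).

Lemma steps_ok_cat s l1 l2 : steps_ok fl rho s (l1 ++ l2) =
  steps_ok fl rho s l1 && steps_ok fl rho (last s (map snd l1)) l2.
Proof. by elim: l1 s => [|[f x] l1 IH] s //=; rewrite IH andbA. Qed.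

Lemma swap_step_props w w' : is_walk w -> swap_step fl sim rho sw w w' ->
  [/\ is_walk w', w'.1 = w.1, wlast w' = wlast w & commute_step sim (word w) (word w')].
Proof.
move=> + [pre [f [s2 [g [s3 [post [E nfg st1 st2 ->]]]]]]].
rewrite /is_walk E steps_ok_cat => /andP [okpre /= /and3P [_ _ okpost]].
have nsim : ~~ sim f g by move: nfg; rewrite negb_or => /andP[].
have /andP [stg stf] := sw_ok st1 st2 nsim.
rewrite /is_walk /wlast /word /= E steps_ok_cat okpre /= stg stf okpost; split => //.
  by rewrite !map_cat !last_cat.
by exists (map fst pre), f, g, (map fst post); rewrite !map_cat.
Qed.

Lemma swaps_props w w' : is_walk w -> swaps w w' ->
  [/\ is_walk w', w'.1 = w.1, wlast w' = wlast w & trace_eq (word w) (word w')].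
Proof.
move=> + ww'; elim: ww' => [{}w|w1 w2 w3 s12 _ IH] okw.
  by split => //; exact: trace_eq_refl.
have [ok2 <- <- E12] := swap_step_props okw s12.
have [ok3 -> -> E23] := IH ok2.
by split => //; apply: rt_trans (rt_step _ _ _ _ E12) E23.
Qed.

Lemma swaps_trans w1 w2 w3 : swaps w1 w2 -> swaps w2 w3 -> swaps w1 w3.
Proof. by elim=> // {}w1 w2' w3' s _ IH /IH; apply: swaps_cons s. Qed.

Lemma commute_step_lift w W' : is_walk w -> commute_step sim (word w) W' ->
  exists2 w', swap_step fl sim rho sw w w' & word w' = W'.
Proof.
move=> okw [u [a [b [v [E -> nab]]]]].
set pre := take (size u) w.2.
have Epre : map fst pre = u by rewrite map_take -/(word w) E take_size_cat.
have El : w.2 = pre ++ drop (size u) w.2 by rewrite cat_take_drop.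
have : map fst (drop (size u) w.2) = a :: b :: v.
  by rewrite map_drop -/(word w) E drop_size_cat.
case: (drop _ _) El => [|[a' s2] [|[b' s3] post]] //= El [ea eb Epost].
subst a' b'.
move: (okw); rewrite /is_walk El steps_ok_cat => /andP [_ /= /and3P [st1 st2 _]].
exists (w.1, pre ++ (b, sw (last w.1 (map snd pre)) a s2 b s3) :: (a, s3) :: post).
  by exists pre, a, s2, b, s3, post; rewrite /=; split.
by rewrite /word map_cat Epre /= Epost.
Qed.

Lemma trace_eq_lift W W' : trace_eq W W' -> forall w, is_walk w -> word w = W ->
  exists2 w', swaps w w' & word w' = W'.
Proof.
elim => [{}W {}W' E|{}W|W1 W2 W3 _ IH12 _ IH23] w okw Ew.
- rewrite -Ew in E; have [w' s Ew'] := commute_step_lift okw E.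
  by exists w' => //; apply: swaps_cons s _; exact: swaps_refl.
- by exists w => //; exact: swaps_refl.
- have [w2 s12 Ew2] := IH12 w okw Ew; have [ok2 _ _ _] := swaps_props okw s12.
  have [w3 s23 Ew3] := IH23 w2 ok2 Ew2.
  by exists w3 => //; exact: swaps_trans s12 s23.
Qed.

(* Atomicity recovers each state from the flaw and the state that follow it,
   so the walk is rebuilt backwards from its final state. *)
Lemma atomic_walk_eq u v : is_walk u -> is_walk v -> word u = word v ->
  wlast u = wlast v -> u = v.
Proof.
case: u v => [s l] [r l']; rewrite /is_walk /word /wlast /=.
elim: l s r l' => [|[f x] l IH] s r [|[g y] l'] //=; first by move=> _ _ _ ->.
case/andP=> stx okl /andP [sty okl'] [efg El] Elast; subst g.
case: (IH x y l' okl okl' El Elast) => exy ell; subst y l'.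
by rewrite (rho_atomic stx sty).
Qed.

Lemma trace_eq_walk_start u v : is_walk u -> is_walk v -> wlast u = wlast v ->
  trace_eq (word u) (word v) -> u.1 = v.1.
Proof.
move=> oku okv Elast E; have [u' s Eu'] := trace_eq_lift E oku erefl.
have [oku' <- Elast' _] := swaps_props oku s.
by rewrite (atomic_walk_eq oku' okv Eu' (etrans Elast' Elast)).
Qed.

Lemma follows_behead (Lam : walk Omega F -> option F) s f x l :
  follows Lam (s, (f, x) :: l) -> follows (fun w => Lam (s, (f, x) :: w.2)) (x, l).
Proof. by move=> Fl i ltil; exact: (Fl i.+1 ltil). Qed.

Lemma follows_trace_eq_inj (Lam : walk Omega F -> option F) s l1 l2 :
  is_walk (s, l1) -> is_walk (s, l2) -> wlast (s, l1) = wlast (s, l2) ->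
  trace_eq (word (s, l1)) (word (s, l2)) ->
  follows Lam (s, l1) -> follows Lam (s, l2) -> l1 = l2.
Proof.
elim: l1 l2 s Lam => [|[f x] l1 IH] [|[g y] l2] s Lam ok1 ok2 Elast E Fl1 Fl2 //;
  try by move/trace_eq_size: E.
have efg : f = g by have := Fl1 0 erefl; rewrite (Fl2 0 erefl) /= => -[->].
subst g; move: ok1 ok2 E => /andP [_ ok1] /andP [_ ok2] /trace_eq_consK E.
have exy : x = y by exact: (@trace_eq_walk_start (x, l1) (y, l2)).
subst y; congr (_ :: _).
exact: IH ok1 ok2 Elast E (follows_behead Fl1) (follows_behead Fl2).
Qed.

Lemma follows_swaps_inj (Lam : walk Omega F -> option F) w1 w2 w :
  is_walk w1 -> is_walk w2 -> follows Lam w1 -> follows Lam w2 ->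
  swaps w1 w -> swaps w2 w -> w1 = w2.
Proof.
case: w1 w2 => [s1 l1] [s2 l2] ok1 ok2 Fl1 Fl2 s1w s2w.
have [_ Es1 Elast1 E1] := swaps_props ok1 s1w.
have [_ Es2 Elast2 E2] := swaps_props ok2 s2w.
have Es : s2 = s1 := etrans (esym Es2) Es1.
subst s2; congr (_, _).
apply: (follows_trace_eq_inj ok1 ok2 _ _ Fl1 Fl2); first by rewrite -Elast1.
exact: trace_eq_trans E1 (trace_eq_sym simC E2).
Qed.

Lemma pi_stable_swaps_exist (pi : F -> 'I_#|F|) w : injective pi ->
  is_walk w -> word w != [::] ->
  exists w', [/\ swaps w w', is_walk w' & pi_stable_word sim pi (word w')].
Proof.
move=> pi_inj okw nw; have [W' E stW'] := pi_stable_exists simC pi_inj nw.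
have [w' s Ew'] := trace_eq_lift E okw erefl; have [okw' _ _ _] := swaps_props okw s.
by exists w'; rewrite Ew'.
Qed.

End Walks.

Unset Implicit Arguments.
Local Open Scope ring_scope.

Theorem theorem4 (R : realFieldType) (Omega F : finType)
  (fl : F -> {set Omega}) (sim : rel F)
  (rho : F -> Omega -> Omega -> R)
  (sw : Omega -> F -> Omega -> F -> Omega -> Omega)
  (Lam : walk Omega F -> option F) (omega : Omega -> R)
  (pi : F -> 'I_#|F|) (t : nat) :
  injective fl ->
  (forall f, fl f != set0) ->
  (forall f s, s \in fl f -> is_distr (rho f s)) ->
  symmetric sim ->
  flaw_transition_ok fl sim rho ->
  atomic fl rho ->
  swap_map_ok fl sim rho sw ->
  swap_map_inj fl sim rho sw ->
  is_strategy fl rho Lam ->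
  is_distr omega ->
  bijective pi ->
  (0 < t)%N ->
  exists (BadPi : walk Omega F -> Prop) (Phi : walk Omega F -> walk Omega F),
    [/\ (forall w, BadPi w -> is_walk fl rho w /\ pi_stable_word sim pi (word w)),
        (forall w, Bad fl rho omega Lam t w -> swaps fl sim rho sw w (Phi w)),
        (forall w, Bad fl rho omega Lam t w -> BadPi (Phi w)),
        (forall w1 w2, Bad fl rho omega Lam t w1 -> Bad fl rho omega Lam t w2 ->
            Phi w1 = Phi w2 -> w1 = w2) &
        (forall w', BadPi w' -> exists2 w, Bad fl rho omega Lam t w & Phi w = w')].
Proof.
move=> _ _ _ simC _ rho_atomic sw_ok _ _ _ /bij_inj pi_inj t_gt0.
pose P w w' := [/\ swaps fl sim rho sw w w', is_walk fl rho w' &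
                   pi_stable_word sim pi (word w')].
pose Phi w := epsilon (inhabits w) (P w).
have PhiP w : Bad fl rho omega Lam t w -> P w (Phi w).
  case=> okw lenw _ _; apply: epsilon_spec; apply: pi_stable_swaps_exist => //.
  by rewrite -size_eq0 size_map -/(wlen w) lenw -lt0n.
exists (fun w' => exists2 w, Bad fl rho omega Lam t w & Phi w = w'), Phi; split.
- by move=> _ [w /PhiP [_ okw' stw'] <-].
- by move=> w /PhiP [].
- by move=> w Bw; exists w.
- move=> w1 w2 B1 B2 E; have [s1 _ _] := PhiP _ B1; have [s2 _ _] := PhiP _ B2.
  case: B1 B2 s2 => ok1 _ _ Fl1 [ok2 _ _ Fl2]; rewrite -E => s2.
  exact: (follows_swaps_inj simC sw_ok rho_atomic ok1 ok2 Fl1 Fl2 s1 s2).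
- by move=> w' [w Bw <-]; exists w.
Qed.
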